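(* Suppose $\Pi$ satisfies the Pollack condition $\alpha_n+\alpha_{n+1}=0$. Put $\alpha=\alpha_{n+1}\alpha_{n+2}\cdots\alpha_{2n}$ and $\beta=\alpha_n\alpha_{n+2}\cdots\alpha_{2n}$. Then $v_p(\alpha)=v_p(\beta)$, and $$r:=v_p(\alpha)-\sum_{i=n+1}^{2n}h_i\;\ge\;\frac{\#\mathrm{Crit}(\Pi)}{2},$$ with equality when $v_p(\alpha_{n+2}\cdots\alpha_{2n})=h_{n+2}+\cdots+h_{2n}$.
   Context: Let $p$ be an odd prime and $n\ge 1$. Fix an isomorphism $\overline{\mathbb{Q}}_p\cong\mathbb{C}$; $v_p$ denotes the $p$-adic valuation on $\mathbb{C}_p$ normalised by $v_p(p)=1$. Let $\Pi$ be a cuspidal automorphic representation of $\mathrm{GL}_{2n}(\mathbb{A}_{\mathbb{Q}})$ which is cohomological with respect to an integral weight $\mu=(\mu_1,\dots,\mu_{2n})\in\mathbb{Z}^{2n}$, which is the transfer of a globally generic cuspidal automorphic representation of $\mathrm{GSpin}_{2n+1}(\mathbb{A}_{\mathbb{Q}})$, and which is unramified at $p$. Then $\mu$ is dominant ($\mu_1\ge\cdots\ge\mu_{2n}$) and pure: there is an integer $w$ (the purity weight) with $\mu_i+\mu_{2n+1-i}=w$ for all $i$. The Hodge–Tate weights are $h_i=\mu_i+2n-i$ ($1\le i\le 2n$). Set $\mathrm{Crit}(\Pi)=\{j\in\mathbb{Z}:\mu_n\ge j\ge\mu_{n+1}\}$, so $\#\mathrm{Crit}(\Pi)=h_n-h_{n+1}$.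 Write $\Pi_p\cong\mathrm{Ind}_{B(\mathbb{Q}_p)}^{\mathrm{GL}_{2n}(\mathbb{Q}_p)}(|\cdot|^{(2n-1)/2}\lambda_p)$ (normalised parabolic induction from the upper triangular Borel $B$) for an unramified character $\lambda_p$ of the diagonal torus; the Satake parameters are $\alpha_i=\lambda_{p,i}(p)$, where $\lambda_{p,i}$ is the $i$-th diagonal component. They are indexed so that $v_p(\alpha_1)\ge\cdots\ge v_p(\alpha_{2n})$ and $\alpha_i\alpha_{2n+1-i}=\lambda$ for all $i$, for a fixed $\lambda$ with $v_p(\lambda)=2n-1+w$ (possible by the transfer from $\mathrm{GSpin}_{2n+1}$). Known fact (Hida), used freely: the Newton polygon (the piecewise linear curve through $(0,0)$ and $(j,\sum_{i=1}^{j}v_p(\alpha_{2n+1-i}))$, $j=1,\dots,2n$) lies on or above the Hodge polygon (through $(0,0)$ and $(j,\sum_{i=1}^{j}h_{2n+1-i})$, $j=1,\dots,2n$), and their endpoints coincide. *)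

From HB Require Import structures.
From mathcomp Require Import all_boot all_order all_algebra.
Set Implicit Arguments. Unset Strict Implicit. Unset Printing Implicit Defensive.
Import Order.TTheory GRing.Theory Num.Theory.
Local Open Scope ring_scope.

(* An abstract (rank-one, Q-valued) valuation on a field K, modelling v_p on
   C_p restricted to nonzero elements (v 0 is junk). *)
Definition is_valuation (K : fieldType) (v : K -> rat) : Prop :=
  (forall x y : K, x != 0 -> y != 0 -> v (x * y) = v x + v y) /\
  (forall x y : K, x != 0 -> y != 0 -> x + y != 0 ->
      Num.min (v x) (v y) <= v (x + y)).

(* Hodge-Tate weights h_i = mu_i + 2n - i, 1-based indexing. *)
Definition HT (n : nat) (mu : nat -> int) (i : nat) : int :=
  mu i + ((2 * n)%N%:Z - i%:Z).

Definition newton (K : fieldType) (v : K -> rat) (n : nat) (alpha : nat -> K)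
  (j : nat) : rat :=
  \sum_(1 <= i < j.+1) v (alpha ((2 * n).+1 - i)%N).

Definition hodge (n : nat) (mu : nat -> int) (j : nat) : rat :=
  \sum_(1 <= i < j.+1) (HT n mu ((2 * n).+1 - i)%N)%:~R.

Definition Crit (n : nat) (mu : nat -> int) (j : int) : bool :=
  (mu n.+1 <= j) && (j <= mu n).

(* #Crit(Pi): number of integers in [mu_{n+1}, mu_n] (mu dominant). *)
Definition crit_card (n : nat) (mu : nat -> int) : nat :=
  absz (mu n - mu n.+1 + 1).

From HB Require Import structures.
From mathcomp Require Import all_boot all_order all_algebra.
From mathcomp Require Import lra zify.
Import Order.TTheory GRing.Theory Num.Theory.
Local Open Scope ring_scope.

(* Proof idea: the Pollack condition gives alpha_n = -alpha_{n+1}, so alpha and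
   beta differ by a sign and v(lambda) = v(alpha_n alpha_{n+1}) = 2 v(alpha_{n+1}),
   i.e. v(alpha_{n+1}) = (2n - 1 + w)/2.  The Newton polygon lies above the Hodge
   polygon at the vertex n - 1, so v(alpha_{n+2} ... alpha_{2n}) is at least
   h_{n+2} + ... + h_{2n}, and by purity (2n - 1 + w)/2 - h_{n+1}
   = (mu_n - mu_{n+1} + 1)/2 = #Crit/2. *)

Section Valuation.

Context {K : fieldType} {v : K -> rat}.
Hypothesis v_valuation : is_valuation v.

Lemma valuationM {x y : K} : x != 0 -> y != 0 -> v (x * y) = v x + v y.
Proof. by case: v_valuation => vM _; apply: vM. Qed.

Lemma valuation1 : v 1 = 0.
Proof. by have := valuationM (oner_neq0 K) (oner_neq0 K); rewrite mulr1; lra. Qed.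

Lemma valuationN {x : K} : x != 0 -> v (- x) = v x.
Proof.
move=> x0; have N1_0 : (-1 : K) != 0 by rewrite oppr_eq0 oner_neq0.
have vN1 : v (-1) = 0.
  by have := valuationM N1_0 N1_0; rewrite mulrNN mulr1 valuation1; lra.
by rewrite -mulN1r valuationM // vN1 add0r.
Qed.

Lemma valuation_prod (I : eqType) (s : seq I) (F : I -> K) :
  (forall i, i \in s -> F i != 0) ->
  \prod_(i <- s) F i != 0 /\ v (\prod_(i <- s) F i) = \sum_(i <- s) v (F i).
Proof.
elim: s => [|x s IHs] Fs0; first by rewrite !big_nil oner_neq0 valuation1.
have [Ps0 vPs] : \prod_(i <- s) F i != 0 /\
                 v (\prod_(i <- s) F i) = \sum_(i <- s) v (F i).
  by apply: IHs => i si; apply: Fs0; rewrite inE si orbT.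
have Fx0 : F x != 0 by apply: Fs0; rewrite inE eqxx.
by rewrite !big_cons mulf_neq0 // valuationM // vPs.
Qed.

End Valuation.

Lemma big_nat_top_rev (R : nmodType) (F : nat -> R) (N j : nat) : (j <= N)%N ->
  \sum_(1 <= i < j.+1) F (N.+1 - i)%N = \sum_(N.+1 - j <= k < N.+1) F k.
Proof.
elim: j => [|j IHj] jN; first by rewrite big_geq // big_geq ?subn0.
rewrite big_nat_recr //= IHj; last by lia.
rewrite (@big_ltn _ _ _ (N.+1 - j.+1)); last by lia.
have -> : (N.+1 - j.+1).+1 = (N.+1 - j)%N by lia.
by rewrite addrC.
Qed.

Lemma newton_tail (K : fieldType) (v : K -> rat) (n : nat) (alpha : nat -> K)
  (j : nat) : (j <= 2 * n)%N ->
  newton v n alpha j = \sum_((2 * n).+1 - j <= i < (2 * n).+1) v (alpha i).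
Proof. exact: (@big_nat_top_rev _ (fun i => v (alpha i))). Qed.

Lemma hodge_tail (n : nat) (mu : nat -> int) (j : nat) : (j <= 2 * n)%N ->
  hodge n mu j = \sum_((2 * n).+1 - j <= i < (2 * n).+1) (HT n mu i)%:~R.
Proof. exact: (@big_nat_top_rev _ (fun i => (HT n mu i)%:~R)). Qed.

Lemma crit_card_half {n : nat} {mu : nat -> int} {w : int} :
  mu n.+1 <= mu n -> mu n + mu n.+1 = w ->
  (crit_card n mu)%:R / 2
    = ((2 * n)%N%:Z - 1 + w)%:~R / 2 - (HT n mu n.+1)%:~R :> rat.
Proof.
move=> mu_dom mu_pure; rewrite /crit_card /HT natr_absz ger0_norm; last by lia.
rewrite -mu_pure; have -> : (2 * n)%N%:Z - n.+1%:Z = n%:Z - 1 by lia.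
by rewrite !(rmorphD, rmorphN, rmorph1, rmorph0) /=; lra.
Qed.

Theorem mainTheorem3 (p n : nat) (K : fieldType) (v : K -> rat)
  (mu : nat -> int) (w : int) (alpha : nat -> K) (lam : K) :
  prime p -> odd p -> (0 < n)%N ->
  is_valuation v -> (p%:R : K) != 0 -> v p%:R = 1 ->
  (forall i, (1 <= i < 2 * n)%N -> mu i.+1 <= mu i) ->
  (forall i, (1 <= i <= 2 * n)%N -> mu i + mu ((2 * n).+1 - i)%N = w) ->
  (forall i, (1 <= i <= 2 * n)%N -> alpha i != 0) ->
  (forall i j, (1 <= i)%N -> (i <= j)%N -> (j <= 2 * n)%N ->
     v (alpha j) <= v (alpha i)) ->
  (forall i, (1 <= i <= 2 * n)%N -> alpha i * alpha ((2 * n).+1 - i)%N = lam) ->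
  v lam = ((2 * n)%N%:Z - 1 + w)%:~R ->
  (forall j, (j <= 2 * n)%N -> hodge n mu j <= newton v n alpha j) ->
  newton v n alpha (2 * n) = hodge n mu (2 * n) ->
  alpha n + alpha n.+1 = 0 ->
  let a := \prod_(n.+1 <= i < (2 * n).+1) alpha i in
  let b := alpha n * \prod_(n.+2 <= i < (2 * n).+1) alpha i in
  let r := v a - \sum_(n.+1 <= i < (2 * n).+1) (HT n mu i)%:~R in
  [/\ v a = v b,
      (crit_card n mu)%:R / 2 <= r &
      v (\prod_(n.+2 <= i < (2 * n).+1) alpha i)
        = \sum_(n.+2 <= i < (2 * n).+1) (HT n mu i)%:~R ->
      r = (crit_card n mu)%:R / 2].
Proof.
move=> _ _ n_gt0 v_val _ _ mu_dom mu_pure alpha0 _ alpha_pair v_lam hida _ pollack.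
have mirror_n : ((2 * n).+1 - n = n.+1)%N by lia.
set P := \prod_(n.+2 <= i < (2 * n).+1) alpha i => a b r.
have [P0 vP] : P != 0 /\ v P = \sum_(n.+2 <= i < (2 * n).+1) v (alpha i).
  by apply: valuation_prod => // i; rewrite mem_index_iota => ?; apply: alpha0; lia.
have alpha_n1_0 : alpha n.+1 != 0 by apply: alpha0; lia.
have alpha_n_0 : alpha n != 0 by apply: alpha0; lia.
have v_a : v a = v (alpha n.+1) + v P by rewrite /a big_ltn 1?valuationM //; lia.
have v_b : v b = v (alpha n) + v P by rewrite valuationM.
have v_alpha_n : v (alpha n) = v (alpha n.+1).
  have -> : alpha n = - alpha n.+1 by apply/eqP; rewrite -subr_eq0 opprK pollack.
  exact: valuationN.
have v_alpha_n1 : v (alpha n.+1) + v (alpha n) = v lam.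
  by rewrite -valuationM // mulrC -mirror_n alpha_pair //; lia.
have hodge_le_vP : \sum_(n.+2 <= i < (2 * n).+1) (HT n mu i)%:~R <= v P.
  have := hida n.-1; rewrite newton_tail ?hodge_tail; try lia.
  have -> : ((2 * n).+1 - n.-1 = n.+2)%N by lia.
  by rewrite vP; apply; lia.
have mu_dom_n : mu n.+1 <= mu n by apply: mu_dom; lia.
have mu_pure_n : mu n + mu n.+1 = w by rewrite -mirror_n; apply: mu_pure; lia.
have split_HT : \sum_(n.+1 <= i < (2 * n).+1) (HT n mu i)%:~R
  = (HT n mu n.+1)%:~R + \sum_(n.+2 <= i < (2 * n).+1) (HT n mu i)%:~R :> rat.
  by rewrite big_ltn //; lia.
rewrite /r split_HT v_a (crit_card_half mu_dom_n mu_pure_n) -v_lam -v_alpha_n1 v_alpha_n.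
by split; [rewrite v_b v_alpha_n | lra | move=> <-; lra].
Qed.
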